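(* Let $(P,\epsilon)$ be a labeled poset. Then $\Phi_\epsilon:\mathcal{A}(\epsilon)\to\mathcal{A}(-\epsilon)$, $\Phi_\epsilon\sigma=\sigma+\delta_\epsilon$, is a bijection if and only if $P$ is dual $\epsilon$-consistent.
   Context: $P$ is a finite poset with $p$ elements, $\omega:P\to\{1,\dots,p\}$ a bijection; write $x\prec y$ if $y$ covers $x$, $E(P)$ the covering pairs, and $\epsilon(x,y)=1$ if $\omega(x)<\omega(y)$, $-1$ otherwise. $-\epsilon$ is defined by $(-\epsilon)(x,y)=-\epsilon(x,y)$ (it is induced by the labeling $p+1-\omega$). For a labeling $\epsilon$, a $(P,\epsilon)$-partition is an order-reversing map $\sigma:P\to\{1,2,\dots\}$ ($x\le y\Rightarrow\sigma(x)\ge\sigma(y)$) with $\sigma(x)>\sigma(y)$ whenever $x\prec y$ and $\epsilon(x,y)=-1$; $\mathcal{A}(\epsilon)$ is the set of $(P,\epsilon)$-partitions. Define $\delta_\epsilon(x)=\max\sum_{i=1}^{\ell}\epsilon(x_{i-1},x_i)$ over all saturated chains $x=x_0\prec x_1\prec\cdots\prec x_\ell$ with $x_\ell$ maximal in $P$. The map $\Phi_\epsilon$ sends $\mathcal{A}(\epsilon)$ injectively into $\mathcal{A}(-\epsilon)$. The dual $(P^*,\epsilon^* )$ has $x<_{P^*}y$ iff $y<_P x$ and $\epsilon^*(y,x)=-\epsilon(x,y)$. A poset $Q$ with labeling $\nu$ is $\nu$-consistent if for each $z$, the sum $\sum\nu(x_{i-1},x_i)$ is the same over all maximal chains $x_0\prec\cdots\prec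 x_n$ of $\{w\le_Q z\}$. $P$ is dual $\epsilon$-consistent if $P^*$ is $\epsilon^*$-consistent. *)

From mathcomp Require Import all_boot all_order all_algebra.
Set Implicit Arguments. Unset Strict Implicit. Unset Printing Implicit Defensive.
Import Order.TTheory GRing.Theory Num.Theory.
Local Open Scope ring_scope.

Section LabeledPoset.
Variables (T : finType) (le : rel T).

Definition ltP (x y : T) : bool := (x != y) && le x y.

Definition coversIn (S : pred T) (x y : T) : bool :=
  [&& S x, S y, ltP x y & [forall z, S z ==> ~~ (ltP x z && ltP z y)]].

Definition covers (x y : T) : bool := coversIn predT x y.

Definition minimalIn (S : pred T) (x : T) : bool :=
  S x && [forall w, (S w && le w x) ==> (w == x)].
Definition maximalIn (S : pred T) (x : T) : bool :=
  S x && [forall w, (S w && le x w) ==> (w == x)].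

(* sum of a labeling along the chain x = x_0, x_1, ..., x_l (s = [x_1;...;x_l]) *)
Definition chain_sum (eps : T -> T -> int) (x : T) (s : seq T) : int :=
  \sum_(p <- zip (x :: s) s) eps p.1 p.2.

Definition sat_chain_to_max (x : T) (s : seq T) : bool :=
  path covers x s && maximalIn predT (last x s).

Fixpoint seqs_upto (n : nat) : seq (seq T) :=
  if n is n'.+1 then [::] :: [seq y :: s | y <- enum T, s <- seqs_upto n']
  else [:: [::]].

Definition omax (a b : option int) : option int :=
  match a, b with
  | Some a, Some b => Some (Num.max a b)
  | None, b => b
  | a, None => a
  end.

(* delta_eps(x) = max of chain sums over saturated chains from x to a maximal
   element.  Every such chain has length < #|T|, so all of them occur among the
   sequences of length at most #|T|. *)
Definition delta (eps : T -> T -> int) (x : T) : int :=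
  odflt 0 (foldr omax None
    [seq Some (chain_sum eps x s) | s <- seqs_upto #|T| & sat_chain_to_max x s]).

Definition PPartition (eps : T -> T -> int) (sigma : T -> int) : Prop :=
  [/\ forall x, 0 < sigma x,
      forall x y, le x y -> sigma y <= sigma x
    & forall x y, covers x y -> eps x y = -1 -> sigma y < sigma x].

Definition Phi (eps : T -> T -> int) (sigma : T -> int) : T -> int :=
  fun x => sigma x + delta eps x.

Definition maximal_chain_in (S : pred T) (x0 : T) (s : seq T) : bool :=
  [&& minimalIn S x0, path (coversIn S) x0 s & maximalIn S (last x0 s)].

Definition consistent (nu : T -> T -> int) : Prop :=
  forall z x1 s1 x2 s2,
    maximal_chain_in (fun w => le w z) x1 s1 ->
    maximal_chain_in (fun w => le w z) x2 s2 ->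
    chain_sum nu x1 s1 = chain_sum nu x2 s2.

End LabeledPoset.

Definition eps_of (T : Type) (omega : T -> nat) (x y : T) : int :=
  if (omega x < omega y)%N then 1 else -1.

Definition neg_lab (T : Type) (eps : T -> T -> int) : T -> T -> int :=
  fun x y => - eps x y.

Definition dual_lab (T : Type) (eps : T -> T -> int) : T -> T -> int :=
  fun a b => - eps b a.

Definition dual_rel (T : Type) (le : rel T) : rel T := fun x y => le y x.

Definition dual_consistent (T : finType) (le : rel T) (eps : T -> T -> int) : Prop :=
  consistent (dual_rel le) (dual_lab eps).

From Pilot Require Import Defs.
From mathcomp Require Import all_boot all_order all_algebra zify.
Import Order.TTheory GRing.Theory Num.Theory.
Local Open Scope ring_scope.
Set Implicit Arguments. Unset Strict Implicit. Unset Printing Implicit Defensive.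

(* As a maximum over saturated chains, delta
   vanishes on maximal elements and satisfies
   delta x >= eps(x,y) + delta y on every cover x -< y.
   Being a (P,lab)-partition is a local condition: positivity on maximal
   elements and, on each cover x -< y, a drop f x - f y of at least 1 if
   lab(x,y) = -1 and at least 0 otherwise.  With the inequality above this
   shows that Phi always maps A(eps) injectively into A(-eps).
   Reading chains of P* backwards, dual eps-consistency says that all
   saturated chains from x up to a maximal element have the same eps-sum,
   i.e. that delta x = eps(x,y) + delta y on every cover; then
   tau |-> tau - delta inverts Phi.  Conversely, if Phi is onto, pick for a
   cover x -< y a (P,-eps)-partition tau whose drop on x -< y is as small as
   allowed: its preimage tau - delta must still drop enough on x -< y, which
   forces delta x <= eps(x,y) + delta y. *)

Section FinitePoset.
Variables (T : finType) (le : rel T).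
Hypotheses (le_refl : reflexive le) (le_anti : antisymmetric le)
  (le_trans : transitive le).

Local Notation lt := (Defs.ltP le).
Local Notation covers := (Defs.covers le).
Local Notation maximal := (maximalIn le predT).

Lemma ltPxx x : lt x x = false.
Proof. by rewrite /Defs.ltP eqxx. Qed.

Lemma ltPW x y : lt x y -> le x y.
Proof. by case/andP. Qed.

Lemma ltP_le_trans x y z : lt x y -> le y z -> lt x z.
Proof.
move=> /andP[nxy lxy] lyz; rewrite /Defs.ltP (le_trans lxy lyz) andbT.
by apply: contraNneq nxy => exz; subst z; apply/eqP/le_anti; rewrite lxy lyz.
Qed.

Lemma ltP_trans : transitive lt.
Proof. by move=> y x z xy /ltPW; apply: ltP_le_trans. Qed.

Lemma ltP_dual x y : Defs.ltP (dual_rel le) x y = lt y x.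
Proof. by rewrite /Defs.ltP eq_sym. Qed.

Lemma coversP x y :
  reflect (lt x y /\ forall z, lt x z -> ~~ lt z y) (covers x y).
Proof.
apply: (iffP and4P) => [[_ _ xy /forallP between]|[xy between]]; split=> //.
  by move=> z xz; have := between z; rewrite xz.
by apply/forallP => z; apply/implyP => _; apply/nandP; case xz: (lt x z); auto.
Qed.

Lemma covers_ltP x y : covers x y -> lt x y.
Proof. by case/coversP. Qed.

Lemma covers_le x y : covers x y -> le x y.
Proof. by move/covers_ltP/ltPW. Qed.

Lemma gt_ind (P : T -> Prop) :
  (forall x, (forall y, lt x y -> P y) -> P x) -> forall x, P x.
Proof.
move=> IH x; have [n] := ubnP #|[pred y | lt x y]|.
elim: n x => // n IHn x /ltnSE up_x; apply: IH => y xy; apply: IHn.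
apply: leq_trans up_x; apply: proper_card; apply/properP; split.
  by apply/subsetP => z; rewrite !inE; exact: ltP_trans.
by exists y; rewrite !inE ?ltPxx.
Qed.

Lemma lt_ind (P : T -> Prop) :
  (forall x, (forall y, lt y x -> P y) -> P x) -> forall x, P x.
Proof.
move=> IH x; have [n] := ubnP #|[pred y | lt y x]|.
elim: n x => // n IHn x /ltnSE down_x; apply: IH => y yx; apply: IHn.
apply: leq_trans down_x; apply: proper_card; apply/properP; split.
  by apply/subsetP => z; rewrite !inE => /ltP_trans; apply.
by exists y; rewrite !inE ?ltPxx.
Qed.

Lemma exists_covers_le x w : lt x w -> exists2 y, covers x y & le y w.
Proof.
elim/lt_ind: w => w IH xw.
case: (pickP (fun z => lt x z && lt z w)) => [z /andP[xz zw]|between].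
  by have [y xy yz] := IH z zw xz; exists y => //; exact: le_trans yz (ltPW zw).
exists w => //; apply/coversP; split=> // z xz; apply/negP => zw.
by have := between z; rewrite xz zw.
Qed.

Lemma maximal_covers m y : maximal m -> ~~ covers m y.
Proof.
case/andP=> _ /forallP/(_ y) my; apply/negP => /covers_ltP/andP[nmy lmy].
by move: my; rewrite /= lmy eq_sym (negbTE nmy).
Qed.

Lemma exists_covers_nonmaximal x : ~~ maximal x -> exists y, covers x y.
Proof.
rewrite /maximalIn /= => /forallPn[w]; rewrite negb_imply => /andP[xw nwx].
have [|y xy _] := @exists_covers_le x w; first by rewrite /Defs.ltP eq_sym nwx.
by exists y.
Qed.

Definition min_drop (lab : T -> T -> int) (x y : T) : int :=
  if lab x y == -1 then 1 else 0.

Lemma min_drop_bounds lab x y : 0 <= min_drop lab x y <= 1.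
Proof. by rewrite /min_drop; case: ifP. Qed.

Lemma PPartition_covers lab f : PPartition le lab f ->
  forall x y, covers x y -> min_drop lab x y <= f x - f y.
Proof.
case=> _ mono strict x y xy; rewrite /min_drop.
case: ifP => [/eqP/(strict _ _ xy)|_]; first lia.
by have := mono _ _ (covers_le xy); lia.
Qed.

Lemma PPartition_of_covers lab f :
  (forall m, maximal m -> 0 < f m) ->
  (forall x y, covers x y -> min_drop lab x y <= f x - f y) ->
  PPartition le lab f.
Proof.
move=> f_max f_covers.
have f_covers_le x y : covers x y -> f y <= f x.
  by move/f_covers; have := min_drop_bounds lab x y; lia.
split=> [||x y xy lab_xy].
- elim/gt_ind=> x IH; have [/f_max //|] := boolP (maximal x).
  case/exists_covers_nonmaximal=> y xy.
  by have := IH y (covers_ltP xy); have := f_covers_le _ _ xy; lia.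
- elim/gt_ind=> x IH w xw; have [<- //|nxw] := eqVneq x w.
  have [|y xy yw] := @exists_covers_le x w; first by rewrite /Defs.ltP nxw.
  by have := IH y (covers_ltP xy) w yw; have := f_covers_le _ _ xy; lia.
- by have := f_covers x y xy; rewrite /min_drop lab_xy eqxx; lia.
Qed.

Lemma chain_sum_nil (lab : T -> T -> int) x : chain_sum lab x [::] = 0.
Proof. by rewrite /chain_sum big_nil. Qed.

Lemma chain_sum_cons (lab : T -> T -> int) x y s :
  chain_sum lab x (y :: s) = lab x y + chain_sum lab y s.
Proof. by rewrite /chain_sum big_cons. Qed.

Lemma chain_sum_rcons (lab : T -> T -> int) x s y :
  chain_sum lab x (rcons s y) = chain_sum lab x s + lab (last x s) y.
Proof.
elim: s x => [|z s IH] x /=; first by rewrite chain_sum_cons !chain_sum_nil add0r addr0.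
by rewrite !chain_sum_cons IH addrA.
Qed.

Lemma chain_sum_rev (lab : T -> T -> int) x s :
  chain_sum (dual_lab lab) (last x s) (rev (belast x s)) = - chain_sum lab x s.
Proof.
elim: s x => [|y s IH] x /=; first by rewrite !chain_sum_nil oppr0.
rewrite rev_cons chain_sum_rcons IH chain_sum_cons opprD addrC /dual_lab.
by case: s {IH} => //= z s; rewrite rev_cons last_rcons.
Qed.

Lemma chain_sum_telescope (e : rel T) (lab : T -> T -> int) (p : T -> int) x s :
  (forall a b, e a b -> lab a b = p a - p b) ->
  path e x s -> chain_sum lab x s = p x - p (last x s).
Proof.
move=> lab_p; elim: s x => [|y s IH] x /=; first by rewrite chain_sum_nil subrr.
by rewrite chain_sum_cons => /andP[/lab_p-> /IH->]; rewrite addrA subrK.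
Qed.

Lemma sat_chain_cons x y s :
  sat_chain_to_max le x (y :: s) = covers x y && sat_chain_to_max le y s.
Proof. by rewrite /sat_chain_to_max /= andbA. Qed.

Lemma sat_chain_maximal m s : maximal m -> sat_chain_to_max le m s -> s = [::].
Proof.
by case: s => // y s /maximal_covers/negbTE m_y; rewrite sat_chain_cons m_y.
Qed.

Lemma exists_sat_chain x : exists s, sat_chain_to_max le x s.
Proof.
elim/gt_ind: x => x IH; have [xm|] := boolP (maximal x).
  by exists [::]; rewrite /sat_chain_to_max /= xm.
case/exists_covers_nonmaximal=> y xy; have [s ys] := IH y (covers_ltP xy).
by exists (y :: s); rewrite sat_chain_cons xy.
Qed.

Lemma sat_chain_size x s : sat_chain_to_max le x s -> (size s <= #|T|)%N.
Proof.
case/andP=> xs _; have: uniq (x :: s).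
  apply: (sorted_uniq ltP_trans ltPxx); exact: (sub_path (@covers_ltP) xs).
move/card_uniqP=> /= card_xs; apply: leq_trans (max_card (mem (x :: s))).
by rewrite card_xs.
Qed.

Lemma mem_seqs_upto n (s : seq T) : (size s <= n)%N -> s \in seqs_upto T n.
Proof.
elim: n s => [|n IH] [|y s] //=; rewrite ?inE ?eqxx // ltnS => s_n.
by apply/orP; right; apply: (allpairs_f (fun y s => y :: s)); rewrite ?mem_enum ?IH.
Qed.

Lemma foldr_omax_Some (L : seq int) c : c \in L ->
  exists2 d, foldr omax None [seq Some a | a <- L] = Some d &
             d \in L /\ {in L, forall a, a <= d}.
Proof.
case: L => // a L _; elim: L a => [|b L IH] a.
  by exists a => //; split=> [|a']; rewrite ?inE // => /eqP->.
have [d /= -> [dL d_max]] := IH b; exists (Num.max a d) => //.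
split=> [|a']; first by rewrite maxEle; case: ifP; rewrite in_cons ?eqxx ?dL ?orbT.
rewrite inE le_max => /predU1P[->|/d_max->]; by rewrite ?lexx ?orbT.
Qed.

Lemma delta_is_max eps x :
  exists2 s, sat_chain_to_max le x s &
    delta le eps x = chain_sum eps x s /\
    forall t, sat_chain_to_max le x t -> chain_sum eps x t <= delta le eps x.
Proof.
set chains := [seq s <- seqs_upto T #|T| | sat_chain_to_max le x s].
have mem_chains s : (s \in chains) = sat_chain_to_max le x s.
  by rewrite mem_filter andb_idr // => /sat_chain_size/mem_seqs_upto.
have [s0 xs0] := exists_sat_chain x.
have [|d max_d [/mapP[s xs d_s] s_max]] :=
  @foldr_omax_Some [seq chain_sum eps x s | s <- chains] (chain_sum eps x s0).
  by apply: map_f; rewrite mem_chains.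
subst d.
have delta_s : delta le eps x = chain_sum eps x s.
  by rewrite /delta -/chains (map_comp Some (chain_sum eps x)) max_d.
exists s; first by rewrite -mem_chains.
by split=> // t xt; rewrite delta_s s_max // map_f ?mem_chains.
Qed.

Lemma delta_attained eps x :
  exists2 s, sat_chain_to_max le x s & delta le eps x = chain_sum eps x s.
Proof. by have [s xs []] := delta_is_max eps x; exists s. Qed.

Lemma chain_sum_le_delta eps x s :
  sat_chain_to_max le x s -> chain_sum eps x s <= delta le eps x.
Proof. by have [_ _ [_]] := delta_is_max eps x; apply. Qed.

Lemma delta_maximal eps m : maximal m -> delta le eps m = 0.
Proof.
move=> mm; have [s ms ->] := delta_attained eps m.
by rewrite (sat_chain_maximal mm ms) chain_sum_nil.
Qed.

Lemma delta_covers_ge eps x y :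
  covers x y -> eps x y + delta le eps y <= delta le eps x.
Proof.
move=> xy; have [s ys ->] := delta_attained eps y.
by rewrite -chain_sum_cons chain_sum_le_delta // sat_chain_cons xy.
Qed.

Lemma coversIn_dual_upset (S : pred T) a b :
  (forall u v, S u -> le u v -> S v) ->
  coversIn (dual_rel le) S b a = S a && covers a b.
Proof.
move=> S_up; apply/and4P/andP => [[_ Sa] | [Sa /coversP[ab between]]].
  rewrite ltP_dual => ab /forallP between; split=> //; apply/coversP; split=> // z az.
  by have := between z; rewrite (S_up a z Sa (ltPW az)) !ltP_dual az andbT.
split=> //; first exact: S_up Sa (ltPW ab); first by rewrite ltP_dual.
apply/forallP => z; apply/implyP => _; rewrite !ltP_dual andbC.
by apply/nandP; case az: (lt a z); [right; exact: between | left].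
Qed.

Lemma sat_chain_dual x s : sat_chain_to_max le x s ->
  maximal_chain_in (dual_rel le) (fun w => dual_rel le w x)
    (last x s) (rev (belast x s)).
Proof.
have x_up u v : dual_rel le u x -> le u v -> dual_rel le v x.
  by move=> xu /(le_trans xu).
case/andP=> xs /andP[_ /forallP last_max].
have x_le_s : all (le x) (x :: s).
  rewrite /= le_refl; apply: sub_all (order_path_min ltP_trans _) => [y|].
    exact: ltPW.
  exact: (sub_path (@covers_ltP) xs).
apply/and3P; split.
- rewrite /minimalIn /dual_rel (allP x_le_s) ?mem_last //=.
  apply/forallP => w; apply/implyP => /andP[_ lw]; exact: (implyP (last_max w)).
- rewrite rev_path; apply: (sub_in_path (P := le x) _ x_le_s xs) => a b xa _ ab.
  by rewrite (coversIn_dual_upset a b x_up) ab andbT; exact: xa.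
- have -> : last (last x s) (rev (belast x s)) = x.
    by case: (s) => [|y t] //; rewrite /= rev_cons last_rcons.
  rewrite /maximalIn /dual_rel le_refl /=; apply/forallP => w.
  by apply/implyP => /andP[xw wx]; apply/eqP/le_anti; rewrite xw wx.
Qed.

Definition delta_additive (eps : T -> T -> int) : Prop :=
  forall x y, covers x y -> delta le eps x = eps x y + delta le eps y.

Lemma additive_of_dual_consistent eps :
  dual_consistent le eps -> delta_additive eps.
Proof.
move=> eps_cons x y xy.
have sat_sum_eq s t : sat_chain_to_max le x s -> sat_chain_to_max le x t ->
    chain_sum eps x s = chain_sum eps x t.
  move=> xs xt; apply: oppr_inj; rewrite -!chain_sum_rev.
  exact: eps_cons (sat_chain_dual xs) (sat_chain_dual xt).
have [s xs ->] := delta_attained eps x; have [t yt ->] := delta_attained eps y.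
by rewrite -chain_sum_cons; apply: sat_sum_eq; rewrite // sat_chain_cons xy.
Qed.

Lemma dual_consistent_of_additive eps :
  delta_additive eps -> dual_consistent le eps.
Proof.
move=> eps_add.
suff sum_delta z x0 s :
    maximal_chain_in (dual_rel le) (fun w => dual_rel le w z) x0 s ->
    chain_sum (dual_lab eps) x0 s = - delta le eps z.
  by move=> z x1 s1 x2 s2 /sum_delta-> /sum_delta->.
case/and3P=> /andP[zx0 /forallP x0_min] zs /andP[z_last /forallP last_max].
have z_up u v : dual_rel le u z -> le u v -> dual_rel le v z.
  by move=> zu /(le_trans zu).
have last_z : last x0 s = z.
  by apply/esym/eqP; apply: (implyP (last_max z)); rewrite /dual_rel /= le_refl.
have x0_max : maximal x0.
  apply/andP; split=> //; apply/forallP => w; apply/implyP => /= x0w.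
  by apply: (implyP (x0_min w)); rewrite /dual_rel /= (le_trans zx0 x0w).
rewrite (chain_sum_telescope (p := delta le eps) _ zs).
  by rewrite last_z (delta_maximal _ x0_max) sub0r.
move=> a b; rewrite (coversIn_dual_upset b a z_up) /dual_lab => /andP[_ /eps_add->].
by rewrite opprD addrCA subrr addr0.
Qed.

Section TightPartition.
Variables (x y : T).
Hypothesis xy : covers x y.

(* Size of the principal up-set of [w] in the poset obtained from [le] by
   identifying [x] with the element [y] covering it. *)
Let up_card (w : T) : int := #|[pred u | le w u || le w y && le x u]|%:Z.

Lemma up_card_gt0 w : 0 < up_card w.
Proof. by rewrite ltz_nat (cardD1 w) inE /= le_refl. Qed.

Lemma up_card_eq : up_card x = up_card y.
Proof.
congr (_%:Z); apply: eq_card => u; rewrite !inE le_refl (covers_le xy) /= orbb.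
by case yu: (le y u); rewrite //= (le_trans (covers_le xy) yu).
Qed.

Lemma up_card_lt w v : lt w v -> (w, v) != (x, y) -> up_card v < up_card w.
Proof.
move=> wv wv_xy; rewrite ltz_nat; apply: proper_card; apply/properP; split.
  apply/subsetP => u; rewrite !inE => /orP[vu|/andP[vy xu]].
    by rewrite (le_trans (ltPW wv) vu).
  by rewrite (le_trans (ltPW wv) vy) xu orbT.
exists w; rewrite !inE ?le_refl //; apply/negP => /orP[vw|/andP[vy xw]].
  by have := ltP_le_trans wv vw; rewrite ltPxx.
have /coversP[_ between] := xy.
have [exw|nxw] := eqVneq x w.
  subst w; have vy' : lt v y.
    by rewrite /Defs.ltP vy andbT; apply: contraNneq wv_xy => ->.
  by have := between v wv; rewrite vy'.
have xw' : lt x w by rewrite /Defs.ltP nxw xw.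
by have := between w xw'; rewrite (ltP_le_trans wv vy).
Qed.

Lemma exists_tight_PPartition lab :
  exists2 tau, PPartition le lab tau & tau x - tau y = min_drop lab x y.
Proof.
have yx : le y x = false.
  by apply/negP => yx; have := ltP_le_trans (covers_ltP xy) yx; rewrite ltPxx.
pose tau w := 2 * up_card w + (if le w x then min_drop lab x y else 0).
have tau_xy : tau x - tau y = min_drop lab x y.
  by rewrite /tau up_card_eq le_refl yx; lia.
exists tau => //; apply: PPartition_of_covers => [m _|w v wv].
  have := up_card_gt0 m; have := min_drop_bounds lab x y.
  by rewrite /tau; case: ifP; lia.
have [[-> ->]|wv_xy] := eqVneq (w, v) (x, y); first by rewrite tau_xy.
have := min_drop_bounds lab w v; have := min_drop_bounds lab x y.
have := up_card_lt (covers_ltP wv) wv_xy.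
by rewrite /tau; do 2 case: ifP; lia.
Qed.

End TightPartition.

Section SignedLabeling.
Variable eps : T -> T -> int.
Hypothesis eps_pm1 : forall x y, eps x y = 1 \/ eps x y = -1.

Lemma min_drop_neg_lab x y :
  min_drop (neg_lab eps) x y = min_drop eps x y + eps x y.
Proof. by rewrite /min_drop /neg_lab; case: (eps_pm1 x y) => ->. Qed.

Lemma Phi_PPartition sigma : PPartition le eps sigma ->
  PPartition le (neg_lab eps) (Phi le eps sigma).
Proof.
move=> sigmaP; apply: PPartition_of_covers => [m mm|x y xy].
  by rewrite /Phi delta_maximal // addr0; case: sigmaP.
have := PPartition_covers sigmaP xy; have := delta_covers_ge eps xy.
by rewrite /Phi min_drop_neg_lab; lia.
Qed.

Lemma Phi_onto tau : delta_additive eps -> PPartition le (neg_lab eps) tau ->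
  exists2 sigma, PPartition le eps sigma & Phi le eps sigma =1 tau.
Proof.
move=> eps_add tauP; exists (fun x => tau x - delta le eps x); last first.
  by move=> x; rewrite /Phi subrK.
apply: PPartition_of_covers => [m mm|x y xy].
  by rewrite delta_maximal // subr0; case: tauP.
have := PPartition_covers tauP xy; rewrite min_drop_neg_lab (eps_add x y xy).
lia.
Qed.

Lemma additive_of_Phi_onto :
  (forall tau, PPartition le (neg_lab eps) tau ->
     exists2 sigma, PPartition le eps sigma & Phi le eps sigma =1 tau) ->
  delta_additive eps.
Proof.
move=> onto x y xy; have [tau tauP tau_xy] := exists_tight_PPartition xy (neg_lab eps).
have [sigma sigmaP Phi_sigma] := onto tau tauP.
have := PPartition_covers sigmaP xy; have := delta_covers_ge eps xy.
have := Phi_sigma x; have := Phi_sigma y.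
by rewrite /Phi min_drop_neg_lab in tau_xy *; lia.
Qed.

End SignedLabeling.

End FinitePoset.

Theorem proposition7p1 (T : finType) (le : rel T)
  (le_refl : reflexive le) (le_anti : antisymmetric le) (le_trans : transitive le)
  (omega : T -> nat) (omega_inj : injective omega)
  (omega_range : forall x, (1 <= omega x <= #|T|)%N) :
  let eps := eps_of omega in
  ((forall sigma, PPartition le eps sigma ->
       PPartition le (neg_lab eps) (Phi le eps sigma))
   /\ (forall sigma1 sigma2, PPartition le eps sigma1 -> PPartition le eps sigma2 ->
         Phi le eps sigma1 =1 Phi le eps sigma2 -> sigma1 =1 sigma2)
   /\ (forall tau, PPartition le (neg_lab eps) tau ->
         exists2 sigma, PPartition le eps sigma & Phi le eps sigma =1 tau))
  <-> dual_consistent le eps.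
Proof.
move=> eps.
have eps_pm1 x y : eps x y = 1 \/ eps x y = -1.
  by rewrite /eps /eps_of; case: ifP; [left | right].
have Phi_inj sigma1 sigma2 :
    Phi le eps sigma1 =1 Phi le eps sigma2 -> sigma1 =1 sigma2.
  by move=> Phi_eq w; apply: (addIr (delta le eps w)); exact: Phi_eq.
split=> [[_ [_ onto]] | eps_cons].
  apply: (dual_consistent_of_additive le_refl le_anti le_trans).
  exact: (additive_of_Phi_onto le_refl le_anti le_trans eps_pm1).
split; first exact: (Phi_PPartition le_refl le_anti le_trans eps_pm1).
split=> [sigma1 sigma2 _ _|tau]; first exact: Phi_inj.
apply: (Phi_onto le_refl le_anti le_trans eps_pm1).
exact: (additive_of_dual_consistent le_refl le_anti le_trans).
Qed.
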